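(* Let $m,k,s$ be positive integers with $s\ge k$, and $\Sigma_W\in\mathbb{R}^{k\times k}$ symmetric positive definite with symmetric positive-definite square root $\Sigma_W^{1/2}$. On $\mathcal{Z}=\mathbb{R}^{m+s}\times\mathbb{R}^{(m+s)\times k}$, write $z=(y_x,y_\perp,w_x,w_\perp)$ with $y_x\in\mathbb{R}^m,y_\perp\in\mathbb{R}^s,w_x\in\mathbb{R}^{m\times k},w_\perp\in\mathbb{R}^{s\times k}$. For any $p\in\mathbb{R}$, define (wherever $w_\perp$ has full column rank and $\hat\gamma^{\mathrm{OLS}}\neq 0$) $$\hat\gamma^{\mathrm{OLS}}=(w_\perp'w_\perp)^{-1}w_\perp'y_\perp,\quad \hat\gamma=\left(1-p\,\frac{y_\perp'y_\perp-\|\hat\gamma^{\mathrm{OLS}}\|^2_{w_\perp'w_\perp}}{\|\hat\gamma^{\mathrm{OLS}}\|^2_{w_\perp'w_\perp}}\right)\hat\gamma^{\mathrm{OLS}},\quad d(z)=y_x-w_x\hat\gamma\in\mathbb{R}^m.$$ Let $G=\mathbb{R}^m\times O(m)\times O(k)\times O(s)$ act by $m_{\mathcal{Z}}(g,(y_x,y_\perp,w_x,w_\perp))=(g_xy_x+g_\mu,\ g_\perp y_\perp,\ g_xw_x\Sigma_W^{-1/2}g_W'\Sigma_W^{1/2},\ g_\perp w_\perp\Sigma_W^{-1/2}g_W'\Sigma_W^{1/2})$ on $\mathcal{Z}$ and $m_{\mathcal{A}}(g,a)=g_xa+g_\mu$ on $\mathcal{A}=\mathbb{R}^m$, for $g=(g_\mu,g_x,g_W,g_\perp)$.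 Then $d$ is invariant: $d(m_{\mathcal{Z}}(g,z))=m_{\mathcal{A}}(g,d(z))$ for all $g\in G$ and all $z$ in the domain of $d$.
   Context: $\|v\|_A=\sqrt{v'Av}$. $O(d)$ is the group of orthogonal $d\times d$ matrices. The map $d$ is the canonical-coordinate form of the paper's two-step shrinkage estimator of $\mu_x=q_x'x\beta$: with $s=n-m-1$, $y_x=q_x'Y$, $y_\perp=q_\perp'Y$, $w_x=q_x'W$, $w_\perp=q_\perp'W$ for an orthonormal basis $(q_{\mathbf{1}},q_x,q_\perp)$ of $\mathbb{R}^n$ adapted to $(\mathbf{1}_n,x)$, and $y_\perp'y_\perp-\|\hat\gamma^{\mathrm{OLS}}\|^2_{w_\perp'w_\perp}$ equals the sum of squared residuals of the regression of $Y$ on $\mathbf{1},X,W$. *)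

From HB Require Import structures.
From mathcomp Require Import all_boot all_order all_algebra.
From mathcomp Require Import reals.
Set Implicit Arguments. Unset Strict Implicit. Unset Printing Implicit Defensive.
Import Order.TTheory GRing.Theory Num.Theory.
Local Open Scope ring_scope.

Definition posdef (R : realType) (n : nat) (A : 'M[R]_n) : Prop :=
  A^T = A /\ forall v : 'cV[R]_n, v != 0 -> 0 < (v^T *m A *m v) ord0 ord0.

Definition orthogonal_mx (R : realType) (n : nat) (A : 'M[R]_n) : Prop :=
  A *m A^T = 1%:M.

Definition sqnormA (R : realType) (n : nat) (A : 'M[R]_n) (v : 'cV[R]_n) : R :=
  (v^T *m A *m v) ord0 ord0.

Definition gammaOLS (R : realType) (s k : nat) (yp : 'cV[R]_s) (wp : 'M[R]_(s, k))
  : 'cV[R]_k := invmx (wp^T *m wp) *m (wp^T *m yp).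

Definition gammaHat (R : realType) (s k : nat) (p : R) (yp : 'cV[R]_s)
  (wp : 'M[R]_(s, k)) : 'cV[R]_k :=
  let g := gammaOLS yp wp in
  let q := sqnormA (wp^T *m wp) g in
  (1 - p * (((yp^T *m yp) ord0 ord0 - q) / q)) *: g.

Definition d_est (R : realType) (m s k : nat) (p : R) (yx : 'cV[R]_m)
  (yp : 'cV[R]_s) (wx : 'M[R]_(m, k)) (wp : 'M[R]_(s, k)) : 'cV[R]_m :=
  yx - wx *m gammaHat p yp wp.

From HB Require Import structures.
From mathcomp Require Import all_boot all_order all_algebra.
From mathcomp Require Import reals.
Import Order.TTheory GRing.Theory Num.Theory.
Local Open Scope ring_scope.

(** The group acts on [w_perp] by [w |-> U w M] with [U] orthogonal and
    [M = Sigma^{-1/2} g_W' Sigma^{1/2}] invertible.  The Gram matrix [w'w] then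
    changes by the congruence [M' (w'w) M], so the OLS estimate becomes
    [M^-1 gamma_OLS], while both [y'y] and [||gamma_OLS||_{w'w}] are unchanged.
    Hence the shrinkage factor is invariant, [gamma_hat] becomes [M^-1 gamma_hat],
    and [w_x gamma_hat] becomes [g_x w_x gamma_hat]; [d] is therefore equivariant. *)

Section GramMatrix.
Variable R : realFieldType.

Lemma rowv_gram_eq0 n (x : 'rV[R]_n) : (x *m x^T) ord0 ord0 = 0 -> x = 0.
Proof.
rewrite mxE => sum_sq_eq0; apply/rowP => j; rewrite mxE.
have sq_ge0 (i : 'I_n) : true -> 0 <= x ord0 i * x^T i ord0.
  by move=> _; rewrite mxE -expr2 sqr_ge0.
have /eqP := psumr_eq0P sq_ge0 sum_sq_eq0 (i := j) isT.
by rewrite mxE mulf_eq0 orbb => /eqP.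
Qed.

Lemma gram_unitmx s k (A : 'M[R]_(s, k)) : \rank A = k -> A^T *m A \in unitmx.
Proof.
move=> rankA; rewrite -row_free_unit; apply: inj_row_free => u uAA0.
have free_At : row_free A^T by rewrite /row_free mxrank_tr rankA.
apply: (row_free_inj free_At); rewrite mul0mx; apply: rowv_gram_eq0.
by rewrite trmx_mul trmxK mulmxA -(mulmxA u) uAA0 mul0mx mxE.
Qed.

Lemma gram_mulmx_orth s m n (U : 'M[R]_s) (A : 'M[R]_(s, m)) (B : 'M[R]_(s, n)) :
  U^T *m U = 1%:M -> (U *m A)^T *m (U *m B) = A^T *m B.
Proof. by move=> UtU; rewrite trmx_mul mulmxA -(mulmxA A^T) UtU mulmx1. Qed.

Lemma gram_congr s k (U : 'M[R]_s) (A : 'M[R]_(s, k)) (M : 'M[R]_k) :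
  U^T *m U = 1%:M -> (U *m A *m M)^T *m (U *m A *m M) = M^T *m (A^T *m A) *m M.
Proof.
move=> UtU; rewrite trmx_mul mulmxA -(mulmxA M^T (U *m A)^T).
by rewrite gram_mulmx_orth // -mulmxA.
Qed.

End GramMatrix.

Lemma posdef_unitmx (R : realType) n (A : 'M[R]_n) : posdef A -> A \in unitmx.
Proof.
case=> _ A_pos; rewrite -row_free_unit; apply: inj_row_free => u uA0.
apply/eqP/negPn/negP => u_neq0.
have := A_pos u^T; rewrite trmx_eq0 => /(_ u_neq0).
by rewrite trmxK uA0 mul0mx mxE ltxx.
Qed.

Lemma sqnormA_congr (R : realType) k (A M : 'M[R]_k) (v : 'cV[R]_k) :
  M \in unitmx -> sqnormA (M^T *m A *m M) (invmx M *m v) = sqnormA A v.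
Proof.
move=> uM; rewrite /sqnormA trmx_mul trmx_inv !mulmxA.
by rewrite mulmxKV ?unitmx_tr // mulmxK.
Qed.

Section Equivariance.
Variables (R : realType) (s k : nat) (U : 'M[R]_s) (M : 'M[R]_k).
Variables (yp : 'cV[R]_s) (wp : 'M[R]_(s, k)).
Hypotheses (UtU : U^T *m U = 1%:M) (uM : M \in unitmx)
  (u_gram : wp^T *m wp \in unitmx).

Lemma gammaOLS_equivariant :
  gammaOLS (U *m yp) (U *m wp *m M) = invmx M *m gammaOLS yp wp.
Proof.
rewrite /gammaOLS gram_congr // trmx_mul -(mulmxA M^T (U *m wp)^T).
rewrite gram_mulmx_orth //.
have u_congr : M^T *m (wp^T *m wp) *m M \in unitmx.
  by rewrite !unitmx_mul unitmx_tr uM u_gram.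
have solves : M^T *m (wp^T *m wp) *m M *m (invmx M *m gammaOLS yp wp)
              = M^T *m (wp^T *m yp).
  by rewrite /gammaOLS !mulmxA mulmxK // -(mulmxA M^T wp^T wp) mulmxK.
by rewrite -solves mulKmx.
Qed.

Lemma gammaHat_equivariant p :
  gammaHat p (U *m yp) (U *m wp *m M) = invmx M *m gammaHat p yp wp.
Proof.
rewrite /gammaHat gammaOLS_equivariant gram_congr // gram_mulmx_orth //.
by rewrite sqnormA_congr // scalemxAr.
Qed.

Lemma d_est_equivariant m p (G : 'M[R]_m) (mu yx : 'cV[R]_m) (wx : 'M[R]_(m, k)) :
  d_est p (G *m yx + mu) (U *m yp) (G *m wx *m M) (U *m wp *m M)
  = G *m d_est p yx yp wx wp + mu.
Proof.
rewrite /d_est gammaHat_equivariant mulmxA mulmxK // mulmxBr !mulmxA.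
by rewrite addrAC.
Qed.

End Equivariance.

Theorem mainTheorem6 (R : realType) (m k s : nat)
  (hm : (0 < m)%N) (hk : (0 < k)%N) (hks : (k <= s)%N)
  (SigW SigWhalf : 'M[R]_k)
  (hSig : posdef SigW) (hhalf : posdef SigWhalf) (hsq : SigWhalf *m SigWhalf = SigW)
  (p : R)
  (gmu : 'cV[R]_m) (gx : 'M[R]_m) (gW : 'M[R]_k) (gp : 'M[R]_s)
  (hgx : orthogonal_mx gx) (hgW : orthogonal_mx gW) (hgp : orthogonal_mx gp)
  (yx : 'cV[R]_m) (yp : 'cV[R]_s) (wx : 'M[R]_(m, k)) (wp : 'M[R]_(s, k))
  (hrank : \rank wp = k) (hols : gammaOLS yp wp != 0) :
  d_est p (gx *m yx + gmu) (gp *m yp)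
        (gx *m wx *m invmx SigWhalf *m gW^T *m SigWhalf)
        (gp *m wp *m invmx SigWhalf *m gW^T *m SigWhalf)
  = gx *m d_est p yx yp wx wp + gmu.
Proof.
set M := invmx SigWhalf *m gW^T *m SigWhalf.
have uM : M \in unitmx.
  have [uW _] := mulmx1_unit hgW.
  by rewrite !unitmx_mul unitmx_inv unitmx_tr uW posdef_unitmx.
have reassoc (n : nat) (A : 'M[R]_(n, k)) :
  A *m invmx SigWhalf *m gW^T *m SigWhalf = A *m M by rewrite !mulmxA.
rewrite !reassoc d_est_equivariant //; [exact: mulmx1C | exact: gram_unitmx].
Qed.
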